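(* Let $n,x$ be integers with $1<x<n$, so that $G=C_{2n}(x,1,n)$ is a $5$-regular circulant graph. If $n\equiv x\equiv 0 \pmod 3$ and $x>\tfrac{2n}{3}$, then $G$ is word-representable.
   Context: Two distinct letters $x,y$ alternate in a word $w$ if, after deleting all other letters from $w$, the resulting word is of the form $xyxy\cdots$ or $yxyx\cdots$ (of even or odd length). A graph $G=(V,E)$ is word-representable if there is a word $w$ over the alphabet $V$, containing every letter of $V$ at least once, such that for all distinct $x,y\in V$, $xy\in E$ if and only if $x$ and $y$ alternate in $w$. For an integer $m$ and a set $R$ of positive integers each at most $m/2$, the circulant graph $C_m(R)$ has vertex set $\{0,1,\dots,m-1\}$, with $i$ and $j$ adjacent iff $\min(|i-j|,\,m-|i-j|)\in R$. $C_{2n}(x,1,n)$ denotes the circulant graph on $2n$ vertices with jump set $\{1,x,n\}$; it is $5$-regular exactly when $1<x<n$. *)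

From mathcomp Require Import all_boot.
Set Implicit Arguments. Unset Strict Implicit. Unset Printing Implicit Defensive.

Definition alt_word (T : Type) (a b : T) (k : nat) : seq T :=
  [seq if odd i then b else a | i <- iota 0 k].

Definition alternate (T : eqType) (w : seq T) (x y : T) : Prop :=
  let s := [seq z <- w | (z == x) || (z == y)] in
  s = alt_word x y (size s) \/ s = alt_word y x (size s).

Definition word_representable (V : finType) (adj : rel V) : Prop :=
  exists w : seq V,
    (forall v : V, v \in w) /\
    (forall u v : V, u != v -> (adj u v <-> alternate w u v)).

Definition cdist (m i j : nat) : nat :=
  let d := if i <= j then j - i else i - j in minn d (m - d).

Definition circulant_adj (m : nat) (R : pred nat) : rel 'I_m :=
  fun i j => (i != j) && R (cdist m i j).
Arguments circulant_adj m R : clear implicits.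

Definition C2n_x1n (n x : nat) : rel 'I_(2 * n)%N :=
  circulant_adj (2 * n)%N (fun d => [|| d == 1, d == x | d == n]).
Arguments C2n_x1n n x : clear implicits.

From mathcomp Require Import all_boot zify.
Set Implicit Arguments. Unset Strict Implicit. Unset Printing Implicit Defensive.

(* The graph is 3-colourable, and every 3-colourable graph is word-representable.
   For the latter, fix a proper colouring with colours 0, 1, 2; in the list of all
   vertices sorted by colour every edge reads uv (lower colour first).  For each
   non-adjacent pair p, q with col p <= col q we append a separator in which every
   edge reads uvuv while p and q do not alternate.  If col q <= col p + 1 it is two
   colour-sorted permutations with p and q placed together right after the layer
   of col p, once as pq and once as qp.  If col p = 0 and col q = 2 this fails (a
   common neighbour of colour 1 must lie between p and q), and the separator is
   instead (V - q) p q (V - p), both parts colour-sorted, which reads ppqq on {p, q}.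
   A proper 3-colouring of C_2n(x,1,n) is i |-> i + b(i) mod 3, where b(i) is the
   index of the block [0,x), [x,2x), [2x,2n) containing i: the block shift repairs
   the jump-1 edges at block boundaries, and since 2n < 3x the jumps x and n, which
   are multiples of 3, always change block. *)

Section Alternation.
Variable T : eqType.
Implicit Types (u v : T) (w : seq T).

Lemma alt_wordS u v k : alt_word u v k.+1 = u :: alt_word v u k.
Proof.
rewrite /alt_word /= -[1]/(1 + 0) iotaDl -map_comp; congr (_ :: _).
by apply: eq_map => i /=; rewrite add0n; case: (odd i).
Qed.

Lemma size_alt_word u v k : size (alt_word u v k) = k.
Proof. by rewrite size_map size_iota. Qed.

Lemma alt_word_double_cat u v k j :
  alt_word u v k.*2 ++ alt_word u v j = alt_word u v (k.*2 + j).
Proof. by elim: k => [|k IH] //; rewrite doubleS !addSn !alt_wordS !cat_cons IH. Qed.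

Lemma alternate_flatten u v (ws : seq (seq T)) :
  {in ws, forall w, exists k, [seq z <- w | (z == u) || (z == v)] = alt_word u v k.*2} ->
  alternate (flatten ws) u v.
Proof.
move=> hws; left.
suff [k ->] : exists k, [seq z <- flatten ws | (z == u) || (z == v)] = alt_word u v k.*2.
  by rewrite size_alt_word.
elim: ws hws => [|w ws IH] hws; first by exists 0.
rewrite /= filter_cat; have [k ->] := hws w (mem_head w ws).
have [j ->] : exists j, [seq z <- flatten ws | (z == u) || (z == v)] = alt_word u v j.*2.
  by apply: IH => w' hw'; apply: hws; rewrite inE hw' orbT.
by exists (k + j); rewrite alt_word_double_cat doubleD.
Qed.

Lemma sorted_alt_word u v k : u != v -> sorted (fun a b => a != b) (alt_word u v k).
Proof.
elim: k u v => [|k IH] u v uv //; rewrite alt_wordS.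
case: k IH => [|k] IH //; rewrite alt_wordS /= uv.
by have := IH v u; rewrite eq_sym alt_wordS => /(_ uv).
Qed.

Lemma alternate_sym w u v : alternate w u v -> alternate w v u.
Proof.
rewrite /alternate (eq_filter (a2 := fun z => (z == u) || (z == v))); last first.
  by move=> z; rewrite orbC.
by case; [right | left].
Qed.

Lemma alternate_sorted w u v : u != v -> alternate w u v ->
  sorted (fun a b => a != b) [seq z <- w | (z == u) || (z == v)].
Proof. by move=> uv [->|->]; apply: sorted_alt_word; rewrite // eq_sym. Qed.

Lemma infix_filter (P : pred T) (s w : seq T) :
  infix s w -> infix (filter P s) (filter P w).
Proof. by case/infixP => [s1 [s2 ->]]; rewrite !filter_cat infix_infix. Qed.

Lemma infix_flatten (s : seq T) (ss : seq (seq T)) : s \in ss -> infix s (flatten ss).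
Proof. by case/splitPr => ss1 ss2; rewrite flatten_cat /= infix_infix. Qed.

End Alternation.

Section RankedWords.
Variable V : finType.

Definition ranked (D : pred V) (r : V -> nat) : seq V :=
  sort (relpre r leq) [seq z <- enum V | D z].

Lemma mem_ranked D r z : (z \in ranked D r) = D z.
Proof. by rewrite mem_sort mem_filter mem_enum andbT. Qed.

Lemma filter_ranked D r u v : r u < r v ->
  [seq z <- ranked D r | (z == u) || (z == v)] = [seq z <- [:: u; v] | D z].
Proof.
move=> ruv; have uv : u != v by apply: contraTneq ruv => ->; rewrite ltnn.
have r_total : total (relpre r leq) by move=> a b; apply: leq_total.
have r_trans : transitive (relpre r leq) by move=> b a c; apply: leq_trans.
rewrite /ranked filter_sort // -filter_predI.
rewrite -[RHS](@sorted_sort _ _ r_trans); last first.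
  by apply: sorted_filter => //=; rewrite andbT ltnW.
apply/perm_sort_inP.
- by move=> a b _ _; apply: r_total.
- by move=> a b c _ _ _; apply: r_trans.
- move=> a b; rewrite !mem_filter !inE /= => /andP [/andP [ha _] _] /andP [/andP [hb _] _].
  by case/orP: ha => /eqP->; case/orP: hb => /eqP->; rewrite // /relpre; lia.
apply: uniq_perm.
- exact/filter_uniq/enum_uniq.
- by apply: filter_uniq; rewrite /= inE uv.
by move=> z; rewrite !mem_filter -enumT mem_enum andbT !inE andbC.
Qed.

End RankedWords.

Section ThreeColourable.
Variables (V : finType) (adj : rel V) (col : V -> nat).
Hypothesis adj_sym : symmetric adj.
Hypothesis col_proper : forall u v, adj u v -> col u != col v.
Hypothesis col_lt3 : forall v, col v < 3.

(* Ranks 3c+1 and 3c+2 put a, then b, right after the colour-c layer. *)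
Definition pair_rank (a b : V) (c : nat) (z : V) : nat :=
  if z == a then (3 * c).+1 else if z == b then (3 * c).+2 else 3 * col z.

Definition nonedge (p q : V) := [&& p != q, ~~ adj p q & col p <= col q].

Definition separator (p q : V) : seq V :=
  if col q == col p + 2 then ranked (predC1 q) col ++ [:: p; q] ++ ranked (predC1 p) col
  else ranked predT (pair_rank p q (col p)) ++ ranked predT (pair_rank q p (col p)).

Definition colour_word : seq V :=
  flatten (ranked predT col ::
           [seq if nonedge p q then separator p q else [::] | p <- enum V, q <- enum V]).

Lemma pair_rank_lt a b c u v :
  c <= col a <= c.+1 -> c <= col b <= c.+1 -> ~~ adj a b ->
  adj u v -> col u < col v -> pair_rank a b c u < pair_rank a b c v.
Proof.
move=> ha hb nab huv cuv; rewrite /pair_rank.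
case: (eqVneq u a) => [?|ua]; case: (eqVneq u b) => [?|ub];
case: (eqVneq v a) => [?|va]; case: (eqVneq v b) => [?|vb]; subst;
  rewrite ?eqxx ?(negbTE ua) ?(negbTE ub) ?(negbTE va) ?(negbTE vb) //=; try lia.
by rewrite adj_sym huv in nab.
Qed.

Lemma filter_separator_edge p q u v : nonedge p q -> adj u v -> col u < col v ->
  [seq z <- separator p q | (z == u) || (z == v)] = [:: u; v; u; v].
Proof.
case/and3P=> pq npq cpq huv cuv; rewrite /separator.
case: ifP => [/eqP cq | /negbT cq].
  rewrite !filter_cat !filter_ranked //=.
  have uq : u != q by apply: contraTneq cuv => ->; have := col_lt3 v; lia.
  have vp : v != p by apply: contraTneq cuv => ->; have := col_lt3 q; lia.
  rewrite uq vp !(eq_sym p) !(eq_sym q) (negbTE uq) (negbTE vp) /=.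
  case: (eqVneq u p) => [up | up]; case: (eqVneq v q) => [vq | vq] //=.
  - by move: npq; rewrite -up -vq huv.
  - by rewrite up.
  - by rewrite vq.
have hp : col p <= col p <= (col p).+1 by rewrite leqnn leqnSn.
have hq : col p <= col q <= (col p).+1 by have := col_lt3 q; lia.
have nqp : ~~ adj q p by rewrite adj_sym.
by rewrite filter_cat !filter_ranked //; apply: pair_rank_lt.
Qed.

Lemma filter_separator_nonedge p q : nonedge p q ->
  ~~ sorted (fun a b => a != b) [seq z <- separator p q | (z == p) || (z == q)].
Proof.
case/and3P=> pq _ _; have qp : q != p by rewrite eq_sym.
rewrite /separator; case: ifP => [/eqP cq | _]; rewrite !filter_cat.
  by rewrite !filter_ranked ?cq ?addn2 //= !(eqxx, orbT, pq, qp) /= eqxx.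
rewrite filter_ranked /pair_rank ?eqxx ?(negbTE qp) //.
rewrite (eq_filter (a2 := fun z => (z == q) || (z == p))); last by move=> z; rewrite orbC.
by rewrite filter_ranked /pair_rank ?eqxx ?(negbTE pq) //= !eqxx pq qp.
Qed.

Lemma colour_word_edge u v : adj u v -> col u < col v -> alternate colour_word u v.
Proof.
move=> huv cuv; apply: alternate_flatten => w.
case/predU1P=> [-> | /allpairsP [[p q] [_ _ ->]] /=].
  by exists 1; rewrite filter_ranked.
by case: ifP => pq; [exists 2; rewrite filter_separator_edge | exists 0].
Qed.

Lemma colour_word_nonedge p q : nonedge p q -> ~ alternate colour_word p q.
Proof.
move=> pq halt; have [p_neq_q _ _] := and3P pq.
have sep_infix : infix (separator p q) colour_word.
  apply/infix_flatten/mem_behead/allpairsP.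
  by exists (p, q); rewrite /= pq !mem_enum.
move/negP: (filter_separator_nonedge pq); apply.
exact: infix_sorted (infix_filter _ sep_infix) (alternate_sorted p_neq_q halt).
Qed.

Theorem three_colourable_word_representable : word_representable adj.
Proof.
exists colour_word; split=> [v | u v uv]; first by rewrite /= mem_cat mem_ranked.
split=> [huv | halt].
  have [cuv | cvu | cuv] := ltngtP (col u) (col v).
  - exact: colour_word_edge.
  - by apply/alternate_sym/colour_word_edge; rewrite // adj_sym.
  - by move: (col_proper huv); rewrite cuv eqxx.
apply/negPn/negP => nadj; have [cuv | /ltnW cvu] := leqP (col u) (col v).
  by apply: (colour_word_nonedge _ halt); rewrite /nonedge uv nadj.
apply: (colour_word_nonedge _ (alternate_sym halt)).
by rewrite /nonedge eq_sym uv adj_sym nadj.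
Qed.

End ThreeColourable.

Lemma cdist_sym m i j : cdist m i j = cdist m j i.
Proof. by rewrite /cdist; case: (leqP i j); case: (leqP j i); lia. Qed.

Lemma circulant_adj_sym m R : symmetric (circulant_adj m R).
Proof. by move=> i j; rewrite /circulant_adj eq_sym cdist_sym. Qed.

Definition block_colour (x i : nat) : nat :=
  (i + (if i < x then 0 else if i < 2 * x then 1 else 2)) %% 3.

Lemma block_colour_proper n x i j :
  1 < x < n -> n %% 3 = 0 -> x %% 3 = 0 -> 2 * n < 3 * x ->
  i < 2 * n -> j < 2 * n ->
  [|| cdist (2 * n) i j == 1, cdist (2 * n) i j == x | cdist (2 * n) i j == n] ->
  block_colour x i != block_colour x j.
Proof.
move=> /andP [x_gt1 x_lt_n] n3 x3 n_lt hi hj; rewrite /block_colour /cdist.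
case: (leqP i j) => hle; case: ifP => c1; case: ifP => c2; try case: ifP => c3;
  try case: ifP => c4; move=> hd; apply/eqP; lia.
Qed.

Theorem theorem22 (n x : nat) :
  1 < x < n ->
  n %% 3 = 0 -> x %% 3 = 0 ->
  2 * n < 3 * x ->
  word_representable (C2n_x1n n x).
Proof.
move=> hxn hn hx h3.
apply: (three_colourable_word_representable (col := fun i : 'I_(2 * n) => block_colour x i)).
- exact: circulant_adj_sym.
- by move=> u v /andP [_ huv]; apply: block_colour_proper (ltn_ord u) (ltn_ord v) huv.
- by move=> v; rewrite ltn_pmod.
Qed.
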